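(* For any $k$-algebra $A$, the map $\mathrm{Irr}(A)\to\mathrm{Irr}(A_{\mathbb{C}})$, $V\mapsto V_{\mathbb{C}}$, is a bijection.
   Context: $k=\mathcal{O}(X)$ is the coordinate algebra of a complex affine variety $X$. A $k$-algebra is a (not necessarily unital or commutative) $\mathbb{C}$-algebra $A$ which is a unital left $k$-module with $\lambda(\omega a)=\omega(\lambda a)=(\lambda\omega)a$ and $\omega(a_1a_2)=(\omega a_1)a_2=a_1(\omega a_2)$. An $A$-module is a complex vector space $V$ with algebra morphisms $A\to\mathrm{Hom}_{\mathbb{C}}(V,V)$ and a unital $k\to\mathrm{Hom}_{\mathbb{C}}(V,V)$ with $(\omega a)v=\omega(av)=a(\omega v)$; irreducible means $AV\neq 0$ and no subspace $0\neq W\neq V$ stable under $A$ and $k$; two $A$-modules are equivalent if there is a linear isomorphism intertwining both the $A$- and $k$-actions. $\mathrm{Irr}(A)$ is the set of equivalence classes of irreducible $A$-modules. $A_{\mathbb{C}}$ is $A$ with the $k$-action forgotten; irreducibility and equivalence of $A_{\mathbb{C}}$-modules are defined the same way using only the action of $A_{\mathbb{C}}$, and $\mathrm{Irr}(A_{\mathbb{C}})$ is the set of equivalence classes of irreducible $A_{\mathbb{C}}$-modules. $V_{\mathbb{C}}$ is the $A$-module $V$ with the $k$-action forgotten. *)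

From HB Require Import structures.
From mathcomp Require Import all_boot all_order all_algebra.
From mathcomp Require Import reals complex.
Set Implicit Arguments. Unset Strict Implicit. Unset Printing Implicit Defensive.
Import Order.TTheory GRing.Theory Num.Theory.
Local Open Scope ring_scope.

(* The complex numbers: R[i] for R : realType (any realType is the field of
   real numbers up to unique isomorphism). *)
Notation CC R := (R[i])%type.

Section KAlgebras.
Variable F : fieldType.

Inductive in_subalg (k : comAlgType F) (s : seq k) : k -> Prop :=
| sa_gen x : x \in s -> in_subalg s x
| sa_one : in_subalg s 1
| sa_add x y : in_subalg s x -> in_subalg s y -> in_subalg s (x + y)
| sa_mul x y : in_subalg s x -> in_subalg s y -> in_subalg s (x * y)
| sa_scale (c : F) x : in_subalg s x -> in_subalg s (c *: x).

Definition fin_gen_alg (k : comAlgType F) : Prop :=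
  exists s : seq k, forall x : k, in_subalg s x.

Definition reduced_alg (k : comAlgType F) : Prop :=
  forall (x : k) (n : nat), x ^+ n = 0 -> x = 0.

(* k is (isomorphic to) the coordinate algebra O(X) of a complex affine variety X
   iff k is a finitely generated, reduced, commutative unital F-algebra. *)
Definition coordinate_algebra (k : comAlgType F) : Prop :=
  fin_gen_alg k /\ reduced_alg k.

Definition nu_algebra (A : lmodType F) (mul : A -> A -> A) : Prop :=
  [/\ forall a b c, mul a (mul b c) = mul (mul a b) c,
      forall (l : F) a b c, mul (l *: a + b) c = l *: mul a c + mul b c
    & forall (l : F) a b c, mul a (l *: b + c) = l *: mul a b + mul a c].

Definition k_algebra (k : comAlgType F) (A : lmodType F) (mul : A -> A -> A)
    (kact : k -> A -> A) : Prop :=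
  [/\ nu_algebra mul,
      [/\ forall a, kact 1 a = a,
          forall w1 w2 a, kact (w1 * w2) a = kact w1 (kact w2 a),
          forall w1 w2 a, kact (w1 + w2) a = kact w1 a + kact w2 a
        & forall w a1 a2, kact w (a1 + a2) = kact w a1 + kact w a2],
      forall (l : F) w a, l *: kact w a = kact w (l *: a)
                       /\ kact w (l *: a) = kact (l *: w) a
    & forall w a1 a2, kact w (mul a1 a2) = mul (kact w a1) a2
                   /\ mul (kact w a1) a2 = mul a1 (kact w a2)].

Definition AC_module (A : lmodType F) (mul : A -> A -> A)
    (V : lmodType F) (rho : A -> V -> V) : Prop :=
  [/\ forall a (l : F) v1 v2, rho a (l *: v1 + v2) = l *: rho a v1 + rho a v2,
      forall (l : F) a1 a2 v, rho (l *: a1 + a2) v = l *: rho a1 v + rho a2 v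
    & forall a1 a2 v, rho (mul a1 a2) v = rho a1 (rho a2 v)].

Definition A_module (k : comAlgType F) (A : lmodType F) (mul : A -> A -> A)
    (kact : k -> A -> A) (V : lmodType F) (rho : A -> V -> V)
    (kappa : k -> V -> V) : Prop :=
  [/\ AC_module mul rho,
      [/\ forall w (l : F) v1 v2, kappa w (l *: v1 + v2) = l *: kappa w v1 + kappa w v2,
          forall (l : F) w1 w2 v, kappa (l *: w1 + w2) v = l *: kappa w1 v + kappa w2 v,
          forall w1 w2 v, kappa (w1 * w2) v = kappa w1 (kappa w2 v)
        & forall v, kappa 1 v = v]
    & forall w a v, rho (kact w a) v = kappa w (rho a v)
                 /\ kappa w (rho a v) = rho a (kappa w v)].

Definition subspace (V : lmodType F) (W : V -> Prop) : Prop :=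
  [/\ W 0, forall v1 v2, W v1 -> W v2 -> W (v1 + v2)
    & forall (l : F) v, W v -> W (l *: v)].

Definition proper_nonzero (V : lmodType F) (W : V -> Prop) : Prop :=
  (exists v, W v /\ v <> 0) /\ (exists v, ~ W v).

Definition AC_irreducible (A : lmodType F) (V : lmodType F) (rho : A -> V -> V) : Prop :=
  (exists a v, rho a v <> 0) /\
  ~ (exists W : V -> Prop, subspace W /\ proper_nonzero W /\
        forall a v, W v -> W (rho a v)).

Definition A_irreducible (k : comAlgType F) (A : lmodType F) (V : lmodType F)
    (rho : A -> V -> V) (kappa : k -> V -> V) : Prop :=
  (exists a v, rho a v <> 0) /\
  ~ (exists W : V -> Prop, subspace W /\ proper_nonzero W /\
        (forall a v, W v -> W (rho a v)) /\ (forall w v, W v -> W (kappa w v))).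

Definition lin_iso (V W : lmodType F) (f : V -> W) : Prop :=
  (forall (l : F) v1 v2, f (l *: v1 + v2) = l *: f v1 + f v2) /\ bijective f.

Definition AC_equiv (A : lmodType F) (V W : lmodType F)
    (rhoV : A -> V -> V) (rhoW : A -> W -> W) : Prop :=
  exists f : V -> W, lin_iso f /\ forall a v, f (rhoV a v) = rhoW a (f v).

Definition A_equiv (k : comAlgType F) (A : lmodType F) (V W : lmodType F)
    (rhoV : A -> V -> V) (kappaV : k -> V -> V)
    (rhoW : A -> W -> W) (kappaW : k -> W -> W) : Prop :=
  exists f : V -> W, lin_iso f /\ (forall a v, f (rhoV a v) = rhoW a (f v))
                               /\ (forall w v, f (kappaV w v) = kappaW w (f v)).

End KAlgebras.

From HB Require Import structures.
From mathcomp Require Import all_boot all_order all_algebra.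
From mathcomp Require Import reals complex.
From Stdlib Require Import Classical ClassicalEpsilon.
Set Implicit Arguments. Unset Strict Implicit. Unset Printing Implicit Defensive.
Import GRing.Theory.
Local Open Scope ring_scope.

(* An irreducible module V is faithful in the sense that a vector killed by
   all of A is zero: the annihilator of A in V is a stable subspace, and
   AV <> 0.  So a vector v is determined by the family (a v)_a.  Hence:
   - an A-stable subspace W of an irreducible A-module contains the k-stable
     proper subspace {v | w v \in W for all w}, which contains AW; so W = 0;
   - an A_C-linear isomorphism of A-modules commutes with k, since
     b (f (w v)) = f ((w b) v) = (w b) (f v) = b (w (f v));
   - on an irreducible A_C-module U, the rule b (w u) = (w b) u defines the
     k-action: uniquely by faithfulness, and it exists because the u admitting
     such a vector form an A-stable subspace containing AU. *)

Section LinearMaps.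
Variables (F : fieldType) (V W : lmodType F) (f : V -> W).
Hypothesis f_lin : forall (l : F) x y, f (l *: x + y) = l *: f x + f y.

Lemma lin_fun0 : f 0 = 0.
Proof.
have := f_lin 1 0 0; rewrite !scale1r addr0 => f00.
by apply: (@addrI _ (f 0)); rewrite addr0 -f00.
Qed.

Lemma lin_funD x y : f (x + y) = f x + f y.
Proof. by have := f_lin 1 x y; rewrite !scale1r. Qed.

Lemma lin_funZ (l : F) x : f (l *: x) = l *: f x.
Proof. by have := f_lin l x 0; rewrite !addr0 lin_fun0 addr0. Qed.

Lemma lin_funB x y : f (x - y) = f x - f y.
Proof. by have := f_lin (-1) y x; rewrite !scaleN1r addrC [_ + f x]addrC. Qed.

Lemma subspace_preimage (S : W -> Prop) :
  subspace S -> subspace (fun v => S (f v)).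
Proof.
case=> S0 SD SZ; split=> [|v1 v2|l v]; first by rewrite lin_fun0.
  by rewrite lin_funD; apply: SD.
by rewrite lin_funZ; apply: SZ.
Qed.

End LinearMaps.

Lemma subspace0 (F : fieldType) (V : lmodType F) : subspace (fun v : V => v = 0).
Proof. by split=> [|v1 v2 -> ->|l v ->]; rewrite ?addr0 ?scaler0. Qed.

Lemma subspace_bigcap (F : fieldType) (V : lmodType F) (I : Type)
    (S : I -> V -> Prop) :
  (forall i, subspace (S i)) -> subspace (fun v => forall i, S i v).
Proof.
move=> SS; split=> [i|v1 v2 S1 S2 i|l v Sv i]; first by case: (SS i).
  by case: (SS i) => _ SD _; apply: SD.
by case: (SS i) => _ _ SZ; apply: SZ.
Qed.

Lemma no_proper_subspace_dichotomy (F : fieldType) (V : lmodType F)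
    (P : (V -> Prop) -> Prop) (T : V -> Prop) :
  ~ (exists S, subspace S /\ proper_nonzero S /\ P S) -> subspace T -> P T ->
  (forall v, T v -> v = 0) \/ (forall v, T v).
Proof.
move=> noS ST PT; case: (classic (exists v, T v /\ v <> 0)) => [Tnz|Tz].
  right=> v; apply: NNPP => nTv; apply: noS.
  by exists T; split; [|split; [split; last exists v|]].
by left=> v Tv; apply: NNPP => nv; apply: Tz; exists v.
Qed.

Section Modules.
Variables (F : fieldType) (k : comAlgType F) (A : lmodType F).
Variables (mul : A -> A -> A) (kact : k -> A -> A).
Implicit Types (V W : lmodType F).

Definition annihilator V (rho : A -> V -> V) (z : V) : Prop := forall a, rho a z = 0.

Lemma AC_irreducible_dichotomy V (rho : A -> V -> V) (T : V -> Prop) :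
  AC_irreducible rho -> subspace T -> (forall a v, T v -> T (rho a v)) ->
  (forall v, T v -> v = 0) \/ (forall v, T v).
Proof. by case=> _; apply: no_proper_subspace_dichotomy. Qed.

Lemma A_irreducible_dichotomy V (rho : A -> V -> V) (kappa : k -> V -> V)
    (T : V -> Prop) :
  A_irreducible rho kappa -> subspace T -> (forall a v, T v -> T (rho a v)) ->
  (forall w v, T v -> T (kappa w v)) ->
  (forall v, T v -> v = 0) \/ (forall v, T v).
Proof.
case=> _ noS ST TA Tk.
by apply: (no_proper_subspace_dichotomy (P := fun S => _ /\ _)) noS ST _.
Qed.

Lemma AC_irreducible_A_irreducible V (rho : A -> V -> V) (kappa : k -> V -> V) :
  AC_irreducible rho -> A_irreducible rho kappa.
Proof. by case=> AV noS; split=> // [[S [SS [PS [SA _]]]]]; apply: noS; exists S. Qed.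

Lemma AC_equiv_refl V (rho : A -> V -> V) : AC_equiv rho rho.
Proof. by exists id; split=> //; split=> [l x y|]; last exists id. Qed.

Section Annihilator.
Variables (V : lmodType F) (rho : A -> V -> V).
Hypothesis rhoM : AC_module mul rho.

Lemma annihilator_subspace : subspace (annihilator rho).
Proof.
case: rhoM => rho_lin _ _.
exact: (subspace_bigcap (fun a => subspace_preimage (rho_lin a) (subspace0 V))).
Qed.

Lemma annihilator_stable a z : annihilator rho z -> annihilator rho (rho a z).
Proof. by case: rhoM => _ _ rho_mul Az b; rewrite -rho_mul Az. Qed.

Lemma annihilator_proper : (exists a v, rho a v <> 0) -> ~ (forall z, annihilator rho z).
Proof. by case=> a [v Av] Aall; apply: Av; apply: Aall. Qed.

Lemma faithful_ext :
  (forall z, annihilator rho z -> z = 0) -> forall x y, (forall a, rho a x = rho a y) -> x = y.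
Proof.
case: rhoM => rho_lin _ _ faithful x y xy; apply/eqP; rewrite -subr_eq0; apply/eqP.
by apply: faithful => a; rewrite (lin_funB (rho_lin a)) xy subrr.
Qed.

Lemma AC_irreducible_faithful z :
  AC_irreducible rho -> annihilator rho z -> z = 0.
Proof.
move=> irr; have [Ann0|Aall] := AC_irreducible_dichotomy irr annihilator_subspace
  (@annihilator_stable); first exact: Ann0.
by case: (annihilator_proper irr.1 Aall).
Qed.

End Annihilator.

Lemma A_irreducible_faithful V (rho : A -> V -> V) (kappa : k -> V -> V) z :
  A_module mul kact rho kappa -> A_irreducible rho kappa ->
  annihilator rho z -> z = 0.
Proof.
case=> rhoM [kappa_lin _ _ _] rho_kappa irr.
have Ann_k w v : annihilator rho v -> annihilator rho (kappa w v).
  by move=> Av b; rewrite -(rho_kappa w b v).2 Av (lin_fun0 (kappa_lin w)).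
have [Ann0|Aall] := A_irreducible_dichotomy irr (annihilator_subspace rhoM)
  (@annihilator_stable _ _ rhoM) Ann_k; first exact: Ann0.
by case: (annihilator_proper irr.1 Aall).
Qed.

Lemma A_irreducible_AC_irreducible V (rho : A -> V -> V) (kappa : k -> V -> V) :
  A_module mul kact rho kappa -> A_irreducible rho kappa -> AC_irreducible rho.
Proof.
move=> Vmod irr; split; first by case: irr.
case=> S [SS [[[s [Ss s_neq0]] [x nSx]] SA]].
case: (Vmod) => _ [kappa_lin _ kappa_mul kappa1] rho_kappa.
pose T v := forall w, S (kappa w v).
have TS v : T v -> S v by move/(_ 1); rewrite kappa1.
have AST a v : S v -> T (rho a v) by move=> Sv w; rewrite -(rho_kappa w a v).1; apply: SA.
have T_sub : subspace T.
  exact: subspace_bigcap (fun w => subspace_preimage (kappa_lin w) SS).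
have TA a v : T v -> T (rho a v) by move/TS; apply: AST.
have Tk w v : T v -> T (kappa w v) by move=> Tv w'; rewrite -kappa_mul.
have [T0|Tall] := A_irreducible_dichotomy irr T_sub TA Tk; last by apply/nSx/TS.
by apply/s_neq0/(A_irreducible_faithful Vmod irr) => a; apply/T0/AST.
Qed.

Lemma AC_intertwiner_commutes_k V W (rhoV : A -> V -> V) (kappaV : k -> V -> V)
    (rhoW : A -> W -> W) (kappaW : k -> W -> W) (f : V -> W) :
  A_module mul kact rhoV kappaV -> A_module mul kact rhoW kappaW ->
  A_irreducible rhoW kappaW -> (forall a v, f (rhoV a v) = rhoW a (f v)) ->
  forall w v, f (kappaV w v) = kappaW w (f v).
Proof.
move=> [_ _ rho_kappaV] Wmod irrW fA w v.
have [rhoW_mod _ rho_kappaW] := Wmod.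
apply: (faithful_ext rhoW_mod (fun z => A_irreducible_faithful Wmod irrW)) => b.
rewrite -fA -(rho_kappaV w b v).2 -(rho_kappaV w b v).1 fA.
by rewrite (rho_kappaW w b (f v)).1 (rho_kappaW w b (f v)).2.
Qed.

Section LiftedKAction.
Hypothesis kalg : k_algebra mul kact.
Variables (U : lmodType F) (rho : A -> U -> U).
Hypotheses (rhoM : AC_module mul rho) (irr : AC_irreducible rho).

Lemma kact_lift w u : exists v, forall b, rho b v = rho (kact w b) u.
Proof.
have [rho_lin _ rho_mul] := rhoM.
have [_ _ _ kact_mul] := kalg.
have liftA a v b : rho b (rho (kact w a) v) = rho (kact w b) (rho a v).
  by rewrite -!rho_mul (kact_mul w b a).2.
pose S u := exists v, forall b, rho b v = rho (kact w b) u.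
have S_sub : subspace S.
  split=> [|x1 x2 [v1 S1] [v2 S2]|l x [v Sv]].
  - by exists 0 => b; rewrite !lin_fun0.
  - by exists (v1 + v2) => b; rewrite !lin_funD // S1 S2.
  - by exists (l *: v) => b; rewrite !lin_funZ // Sv.
have SA a v : S (rho a v) by exists (rho (kact w a) v); apply: liftA.
have [S0|Sall] := AC_irreducible_dichotomy irr S_sub (fun a v _ => SA a v).
  by case: irr => [[a [v Av]] _]; case: Av; apply: S0.
exact: Sall.
Qed.

Definition lifted_kaction (w : k) (u : U) : U :=
  proj1_sig (constructive_indefinite_description _ (kact_lift w u)).

Lemma lifted_kactionP w u b : rho b (lifted_kaction w u) = rho (kact w b) u.
Proof. exact: (proj2_sig (constructive_indefinite_description _ (kact_lift w u))). Qed.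

Lemma lifted_kaction_A_module : A_module mul kact rho lifted_kaction.
Proof.
have [_ [kact1 kactM kactD _] kactZ kact_mul] := kalg.
have [rho_lin rho_linA rho_mul] := rhoM.
have ext := faithful_ext rhoM (fun z => AC_irreducible_faithful rhoM irr).
split=> //; first split.
- by move=> w l v1 v2; apply: ext => b; rewrite lifted_kactionP !rho_lin !lifted_kactionP.
- move=> l w1 w2 v; apply: ext => b.
  rewrite lifted_kactionP rho_lin !lifted_kactionP -rho_linA.
  by rewrite kactD -(kactZ l w1 b).2 -(kactZ l w1 b).1.
- move=> w1 w2 v; apply: ext => b.
  by rewrite !lifted_kactionP -kactM mulrC.
- by move=> v; apply: ext => b; rewrite lifted_kactionP kact1.
- move=> w a v; split; apply: ext => b.
  + by rewrite -rho_mul lifted_kactionP -rho_mul (kact_mul w b a).2.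
  + by rewrite lifted_kactionP -!rho_mul lifted_kactionP (kact_mul w b a).1.
Qed.

End LiftedKAction.

End Modules.

Theorem corollary3p4 (R : realType) (k : comAlgType (CC R))
    (A : lmodType (CC R)) (mul : A -> A -> A) (kact : k -> A -> A) :
  coordinate_algebra k ->
  k_algebra mul kact ->
  (* (1a) V irreducible A-module ==> V_C irreducible A_C-module *)
  (forall (V : lmodType (CC R)) (rho : A -> V -> V) (kappa : k -> V -> V),
      A_module mul kact rho kappa -> A_irreducible rho kappa ->
      AC_irreducible rho)
  /\
  (* (1b) equivalent A-modules have equivalent underlying A_C-modules *)
  (forall (V W : lmodType (CC R)) (rhoV : A -> V -> V) (kappaV : k -> V -> V)
          (rhoW : A -> W -> W) (kappaW : k -> W -> W),
      A_module mul kact rhoV kappaV -> A_module mul kact rhoW kappaW ->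
      A_equiv rhoV kappaV rhoW kappaW -> AC_equiv rhoV rhoW)
  /\
  (* (2) injectivity *)
  (forall (V W : lmodType (CC R)) (rhoV : A -> V -> V) (kappaV : k -> V -> V)
          (rhoW : A -> W -> W) (kappaW : k -> W -> W),
      A_module mul kact rhoV kappaV -> A_irreducible rhoV kappaV ->
      A_module mul kact rhoW kappaW -> A_irreducible rhoW kappaW ->
      AC_equiv rhoV rhoW -> A_equiv rhoV kappaV rhoW kappaW)
  /\
  (* (3) surjectivity *)
  (forall (U : lmodType (CC R)) (rhoU : A -> U -> U),
      AC_module mul rhoU -> AC_irreducible rhoU ->
      exists (V : lmodType (CC R)) (rho : A -> V -> V) (kappa : k -> V -> V),
        [/\ A_module mul kact rho kappa, A_irreducible rho kappa
          & AC_equiv rho rhoU]).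
Proof.
(* the argument works for every commutative k *)
move=> _ kalg; split; [|split; [|split]].
- exact: A_irreducible_AC_irreducible.
- by move=> V W rhoV kappaV rhoW kappaW _ _ [f [f_iso [fA _]]]; exists f.
- move=> V W rhoV kappaV rhoW kappaW Vmod _ Wmod irrW [f [f_iso fA]].
  by exists f; do !split=> //; apply: (AC_intertwiner_commutes_k Vmod Wmod irrW fA).
- move=> U rhoU rhoM irr; exists U, rhoU, (lifted_kaction kalg rhoM irr).
  split; first exact: lifted_kaction_A_module.
    exact: AC_irreducible_A_irreducible.
  exact: AC_equiv_refl.
Qed.
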